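(* Let $0<a,b<1$, $P_1=T_1$, $P_2>0$. Consider the scheme where user 1 sends only a private Gaussian message of power $P_1$ and user 2 sends a public Gaussian message of power $P_2-\hat P_2$ and a private Gaussian message of power $\hat P_2$, with $\hat P_2\in[0,P_2]$; user 2's public message is decoded first at both receivers treating all other signals as noise, at the largest rate decodable at both receivers, and then the private messages are decoded treating the remaining interference as noise. Then for every $\hat P_2\in[0,P_2]$ the rate of user 2's public message is limited by receiver 1, and the sum-rate equals $\tfrac12\log_2(T_1+aP_2+1)$, independent of $\hat P_2$. Symmetrically, if $P_2=T_2$ the analogous scheme with roles of the users exchanged gives sum-rate $\tfrac12\log_2(T_2+bP_1+1)$ independent of the split of user 1's power.
   Context: Weak GIC $Y_1=X_1+\sqrt aX_2+Z_1$, $Y_2=\sqrt bX_1+X_2+Z_2$ with $Z_i\sim N(0,1)$ independent of inputs; $T_1=\frac{1-a}{ab}$, $T_2=\frac{1-b}{ab}$. *)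

From Stdlib Require Import Reals.
Open Scope R_scope.

Definition log2 (x : R) : R := ln x / ln 2.

Definition gcap (snr : R) : R := / 2 * log2 (1 + snr).

(* Weak Gaussian IC:  Y1 = X1 + sqrt a X2 + Z1,  Y2 = sqrt b X1 + X2 + Z2. *)
Definition T1 (a b : R) : R := (1 - a) / (a * b).
Definition T2 (a b : R) : R := (1 - b) / (a * b).

(* ---- Scheme 1: user 1 private only (power P1); user 2 public power
   P2 - Q2 and private power Q2.  Public message of user 2 decoded first at
   both receivers, treating everything else as noise. *)

Definition s1_pub_rx1 (a b P1 P2 Q2 : R) : R :=
  gcap (a * (P2 - Q2) / (P1 + a * Q2 + 1)).
Definition s1_pub_rx2 (a b P1 P2 Q2 : R) : R :=
  gcap ((P2 - Q2) / (b * P1 + Q2 + 1)).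
Definition s1_pub (a b P1 P2 Q2 : R) : R :=
  Rmin (s1_pub_rx1 a b P1 P2 Q2) (s1_pub_rx2 a b P1 P2 Q2).
Definition s1_priv1 (a b P1 P2 Q2 : R) : R := gcap (P1 / (a * Q2 + 1)).
Definition s1_priv2 (a b P1 P2 Q2 : R) : R := gcap (Q2 / (b * P1 + 1)).
Definition s1_sum (a b P1 P2 Q2 : R) : R :=
  s1_pub a b P1 P2 Q2 + s1_priv1 a b P1 P2 Q2 + s1_priv2 a b P1 P2 Q2.

Definition s2_pub_rx1 (a b P1 P2 Q1 : R) : R :=
  gcap ((P1 - Q1) / (a * P2 + Q1 + 1)).
Definition s2_pub_rx2 (a b P1 P2 Q1 : R) : R :=
  gcap (b * (P1 - Q1) / (P2 + b * Q1 + 1)).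
Definition s2_pub (a b P1 P2 Q1 : R) : R :=
  Rmin (s2_pub_rx1 a b P1 P2 Q1) (s2_pub_rx2 a b P1 P2 Q1).
Definition s2_priv1 (a b P1 P2 Q1 : R) : R := gcap (Q1 / (a * P2 + 1)).
Definition s2_priv2 (a b P1 P2 Q1 : R) : R := gcap (P2 / (b * Q1 + 1)).
Definition s2_sum (a b P1 P2 Q1 : R) : R :=
  s2_pub a b P1 P2 Q1 + s2_priv1 a b P1 P2 Q1 + s2_priv2 a b P1 P2 Q1.

From Stdlib Require Import Reals Lra Psatz.
Open Scope R_scope.

(* The hypothesis P1 = T1
   says exactly that a * (b * P1 + 1) = 1: at receiver 2 the interference
   of user 1 plus noise is 1/a.  Two general facts about gcap drive the
   argument:
   - monotonicity, which reduces "receiver 1 limits the public rate" to a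
     comparison of the two public SNRs, and that comparison boils down to
     a * (b * P1 + Q2 + 1) = 1 + a * Q2 <= P1 + a * Q2 + 1;
   - the chain rule of successive decoding,
       gcap (s / (t + n)) + gcap (t / n) = gcap ((s + t) / n),
     applied twice (after rewriting Q2 / (b * P1 + 1) as a * Q2), which
     telescopes the three rates of scheme 1 into gcap (P1 + a * P2).
   Scheme 2 is scheme 1 with the users exchanged (a <-> b, P1 <-> P2), so
   the second half of the theorem follows from the first by symmetry. *)

Lemma ln2_pos : 0 < ln 2.
Proof. pose proof ln_lt_2; lra. Qed.

Lemma gcap_le (x y : R) : -1 < x -> x <= y -> gcap x <= gcap y.
Proof.
  intros Hx Hxy. unfold gcap, log2, Rdiv.
  apply Rmult_le_compat_l; [lra |].
  apply Rmult_le_compat_r; [apply Rlt_le, Rinv_0_lt_compat, ln2_pos |].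
  destruct (Req_dec x y) as [-> | Hne]; [lra |].
  apply Rlt_le, ln_increasing; lra.
Qed.

Lemma snr_gt_m1 (u v : R) : 0 <= u -> 0 < v -> -1 < u / v.
Proof.
  intros Hu Hv. apply Rlt_le_trans with 0; [lra |].
  unfold Rdiv. apply Rmult_le_pos; [lra | apply Rlt_le, Rinv_0_lt_compat, Hv].
Qed.

Lemma gcap_add (x y : R) : -1 < x -> -1 < y ->
  gcap x + gcap y = gcap ((1 + x) * (1 + y) - 1).
Proof.
  intros Hx Hy. unfold gcap, log2.
  replace (1 + ((1 + x) * (1 + y) - 1)) with ((1 + x) * (1 + y)) by ring.
  rewrite ln_mult by lra. field. apply Rgt_not_eq, ln2_pos.
Qed.

Lemma gcap_chain (s t n : R) : 0 <= s -> 0 <= t -> 0 < n ->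
  gcap (s / (t + n)) + gcap (t / n) = gcap ((s + t) / n).
Proof.
  intros Hs Ht Hn.
  rewrite gcap_add by (apply snr_gt_m1; lra).
  f_equal. field. lra.
Qed.

Lemma T1_level (a b P1 : R) : 0 < a < 1 -> 0 < b < 1 -> P1 = T1 a b ->
  0 < P1 /\ a * (b * P1 + 1) = 1.
Proof.
  intros Ha Hb ->. unfold T1. split.
  - apply Rdiv_lt_0_compat; nra.
  - field. lra.
Qed.

Section SchemeOne.

Variables a b P1 P2 Q2 : R.
Hypothesis Ha : 0 < a.
Hypothesis HP1 : 0 <= P1.
Hypothesis Hlevel : a * (b * P1 + 1) = 1.
Hypothesis HQ2 : 0 <= Q2 <= P2.

Lemma s1_public_limited_by_rx1 :
  s1_pub_rx1 a b P1 P2 Q2 <= s1_pub_rx2 a b P1 P2 Q2.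
Proof.
  assert (Hrx2 : (P2 - Q2) / (b * P1 + Q2 + 1) = a * (P2 - Q2) / (a * Q2 + 1)).
  { replace (b * P1 + Q2 + 1) with ((a * Q2 + 1) / a)
      by (field_simplify_eq; lra).
    field; split; nra. }
  unfold s1_pub_rx1, s1_pub_rx2. apply gcap_le.
  - apply snr_gt_m1; nra.
  - rewrite Hrx2. unfold Rdiv.
    apply Rmult_le_compat_l; [nra |].
    apply Rinv_le_contravar; nra.
Qed.

Lemma s1_pub_eq_rx1 : s1_pub a b P1 P2 Q2 = s1_pub_rx1 a b P1 P2 Q2.
Proof. apply Rmin_left, s1_public_limited_by_rx1. Qed.

Lemma s1_sum_telescopes : s1_sum a b P1 P2 Q2 = gcap (P1 + a * P2).
Proof.
  assert (Hpriv2 : Q2 / (b * P1 + 1) = a * Q2 / 1) by (field_simplify_eq; nra).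
  unfold s1_sum. rewrite s1_pub_eq_rx1.
  unfold s1_pub_rx1, s1_priv1, s1_priv2.
  replace (P1 + a * Q2 + 1) with (P1 + (a * Q2 + 1)) by ring.
  rewrite gcap_chain by nra.
  rewrite Hpriv2, gcap_chain by nra.
  f_equal. field.
Qed.

End SchemeOne.

Lemma s2_pub_swap (a b P1 P2 Q1 : R) :
  s2_pub a b P1 P2 Q1 = s1_pub b a P2 P1 Q1.
Proof. unfold s2_pub, s1_pub. apply Rmin_comm. Qed.

Lemma s2_sum_swap (a b P1 P2 Q1 : R) :
  s2_sum a b P1 P2 Q1 = s1_sum b a P2 P1 Q1.
Proof.
  unfold s2_sum, s1_sum. rewrite s2_pub_swap.
  unfold s2_priv1, s2_priv2, s1_priv1, s1_priv2. ring.
Qed.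

Lemma scheme1_rates (a b : R) (ha : 0 < a < 1) (hb : 0 < b < 1)
  (P1 P2 Q2 : R) : P1 = T1 a b -> 0 <= Q2 <= P2 ->
  s1_pub a b P1 P2 Q2 = s1_pub_rx1 a b P1 P2 Q2 /\
  s1_sum a b P1 P2 Q2 = / 2 * log2 (T1 a b + a * P2 + 1).
Proof.
  intros HT HQ2.
  destruct (T1_level a b P1 ha hb HT) as [HP1 Hlevel].
  split.
  - apply s1_pub_eq_rx1; lra.
  - rewrite s1_sum_telescopes by lra. unfold gcap. rewrite <- HT.
    f_equal. f_equal. ring.
Qed.

Theorem mainTheorem9 (a b : R) (ha : 0 < a < 1) (hb : 0 < b < 1) :
  (forall P1 P2 : R, P1 = T1 a b -> 0 < P2 ->
     forall Q2 : R, 0 <= Q2 <= P2 ->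
       s1_pub a b P1 P2 Q2 = s1_pub_rx1 a b P1 P2 Q2 /\
       s1_sum a b P1 P2 Q2 = / 2 * log2 (T1 a b + a * P2 + 1)) /\
  (forall P1 P2 : R, P2 = T2 a b -> 0 < P1 ->
     forall Q1 : R, 0 <= Q1 <= P1 ->
       s2_pub a b P1 P2 Q1 = s2_pub_rx2 a b P1 P2 Q1 /\
       s2_sum a b P1 P2 Q1 = / 2 * log2 (T2 a b + b * P1 + 1)).
Proof.
  split.
  - intros P1 P2 HT _ Q2 HQ2. exact (scheme1_rates a b ha hb P1 P2 Q2 HT HQ2).
  - intros P1 P2 HT _ Q1 HQ1.
    assert (HT2 : T2 a b = T1 b a) by (unfold T1, T2; rewrite Rmult_comm; reflexivity).
    rewrite HT2 in HT |- *.
    rewrite s2_pub_swap, s2_sum_swap.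
    exact (scheme1_rates b a hb ha P2 P1 Q1 HT HQ1).
Qed.
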